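(* Let $a\ge b\ge1$ be integers and define $c_j,d_j$ ($j\in\mathbb Z_+$) by $c_0=d_0=0$, $c_1=d_1=1$, $c_{k+2}+c_k=a d_{k+1}$, $d_{k+2}+d_k=b c_{k+1}$. Then both inequalities $$bc_{k+1}^2+ad_k^2-abc_{k+1}d_k+2ad_k-abc_{k+1}+a\le0,$$ $$bc_k^2+ad_{k+1}^2-abd_{k+1}c_k-abd_{k+1}+2bc_k+b\le0$$ hold (1) for all $k\ge0$ if $b\ge2$, and (2) for all $k\ge1$ if $b=1$ and $a\ge5$.
   Context: $\mathbb Z_+=\{0,1,2,\dots\}$. *)

From mathcomp Require Import all_boot all_order all_algebra.
Set Implicit Arguments. Unset Strict Implicit. Unset Printing Implicit Defensive.
Import Order.TTheory GRing.Theory Num.Theory.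
Local Open Scope ring_scope.

(* cd_pair a b k = (c_k, d_k, c_{k+1}, d_{k+1}) where
   c_0 = d_0 = 0, c_1 = d_1 = 1,
   c_{k+2} = a d_{k+1} - c_k,  d_{k+2} = b c_{k+1} - d_k. *)
Fixpoint cd_quad (a b : int) (k : nat) : int * int * int * int :=
  match k with
  | 0%N => (0, 0, 1, 1)
  | k'.+1 =>
      let '(c0, d0, c1, d1) := cd_quad a b k' in
      (c1, d1, a * d1 - c0, b * c1 - d0)
  end.

Definition cseq (a b : int) (k : nat) : int := (cd_quad a b k).1.1.1.
Definition dseq (a b : int) (k : nat) : int := (cd_quad a b k).1.1.2.

Lemma cseq_rec a b k : cseq a b k.+2 + cseq a b k = a * dseq a b k.+1.
Proof.
rewrite /cseq /dseq /=; case: (cd_quad a b k) => [[[c0 d0] c1] d1] /=.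
by rewrite subrK.
Qed.
Lemma dseq_rec a b k : dseq a b k.+2 + dseq a b k = b * cseq a b k.+1.
Proof.
rewrite /cseq /dseq /=; case: (cd_quad a b k) => [[[c0 d0] c1] d1] /=.
by rewrite subrK.
Qed.

Definition ineq1 (a b : int) (k : nat) : Prop :=
  let c := cseq a b in let d := dseq a b in
  b * c k.+1 ^+ 2 + a * d k ^+ 2 - a * b * c k.+1 * d k + 2 * a * d k
    - a * b * c k.+1 + a <= 0.

Definition ineq2 (a b : int) (k : nat) : Prop :=
  let c := cseq a b in let d := dseq a b in
  b * c k ^+ 2 + a * d k.+1 ^+ 2 - a * b * d k.+1 * c k - a * b * d k.+1
    + 2 * b * c k + b <= 0.

(* The quadratic forms  b c_(k+1)^2 + a d_k^2 - ab c_(k+1) d_k  and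
   b c_k^2 + a d_(k+1)^2 - ab d_(k+1) c_k  are exchanged by k -> k+1, so each
   takes only the values a and b.  The linear parts of the two inequalities are
   then  -a (d_(k+2) - d_k - 1)  and  -b (c_(k+2) - c_k - 1),  and the
   subsequences of even and of odd index satisfy  x_(n+2) = (ab-2) x_(n+1) - x_n,
   whose increments are nondecreasing once ab >= 4.  Hence it suffices to check
   the inequalities on the first increment of each parity class. *)
From mathcomp Require Import all_boot all_order all_algebra.
From mathcomp Require Import zify ring lra.
Set Implicit Arguments.
Unset Strict Implicit.
Unset Printing Implicit Defensive.

Import Order.TTheory GRing.Theory Num.Theory.
Local Open Scope ring_scope.

Lemma le_mul_subr1_trans (R : numDomainType) (s t m z : R) :
  m <= z -> 0 <= s -> t <= s * (m - 1) -> t <= s * (z - 1).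
Proof. by move=> le_mz s_ge0 /le_trans; apply; rewrite ler_wpM2l // lerD2r. Qed.

Section SecondOrderRecurrence.
Variables (R : realDomainType) (D : R) (x : nat -> R).
Hypothesis D_ge2 : 2 <= D.
Hypothesis x_rec : forall n, x n.+2 = D * x n.+1 - x n.
Hypotheses (x0_ge0 : 0 <= x 0) (x0_le1 : x 0 <= x 1).

Lemma rec_ge0_nondecr n : 0 <= x n <= x n.+1.
Proof.
elim: n => [|n /andP[xn_ge0 xn_le]]; first by apply/andP.
have xSn_ge0 : 0 <= x n.+1 by apply: le_trans xn_le.
rewrite x_rec xSn_ge0 /=.
have : 0 <= (D - 2) * x n.+1 by rewrite mulr_ge0 // subr_ge0.
nra.
Qed.

Lemma rec_incr_homo : {homo (fun n => x n.+1 - x n) : m n / (m <= n)%N >-> m <= n}.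
Proof.
apply: homo_leq; [exact: lexx | exact: le_trans | move=> n].
have /andP[xSn_ge0 _] := rec_ge0_nondecr n.+1.
have : 0 <= (D - 2) * x n.+1 by rewrite mulr_ge0 // subr_ge0.
rewrite x_rec; nra.
Qed.

End SecondOrderRecurrence.

Lemma rec2_incr_mono (R : realDomainType) (D : R) (y : nat -> R) :
    2 <= D -> (forall k, y k.+4 = D * y k.+2 - y k) ->
    0 <= y 0 <= y 2 -> 0 <= y 1 <= y 3 ->
  forall j k, (j <= k)%N -> odd j = odd k -> y j.+2 - y j <= y k.+2 - y k.
Proof.
move=> D_ge2 y_rec /andP[y0_ge0 y0_le2] /andP[y1_ge0 y1_le3] j k le_jk odd_jk.
pose x n := y (n.*2 + odd k)%N.
have x_rec n : x n.+2 = D * x n.+1 - x n by rewrite /x y_rec.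
have [x0_ge0 x0_le1] : 0 <= x 0 /\ x 0 <= x 1 by rewrite /x; case: (odd k).
have := rec_incr_homo D_ge2 x_rec x0_ge0 x0_le1 (half_leq le_jk).
have half_jE : (j./2.*2 + odd k)%N = j by rewrite -odd_jk addnC odd_double_half.
have half_kE : (k./2.*2 + odd k)%N = k by rewrite addnC odd_double_half.
by rewrite /x !doubleS !addSn half_jE half_kE.
Qed.

Section CDSequences.
Variables a b : int.
Local Notation c := (cseq a b).
Local Notation d := (dseq a b).

Lemma cseqSS k : c k.+2 = a * d k.+1 - c k.
Proof. by rewrite -cseq_rec addrK. Qed.

Lemma dseqSS k : d k.+2 = b * c k.+1 - d k.
Proof. by rewrite -dseq_rec addrK. Qed.

Lemma cseq_rec2 k : c k.+4 = (a * b - 2) * c k.+2 - c k.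
Proof. by rewrite cseqSS dseqSS (cseqSS k); ring. Qed.

Lemma dseq_rec2 k : d k.+4 = (a * b - 2) * d k.+2 - d k.
Proof. by rewrite dseqSS cseqSS (dseqSS k); ring. Qed.

Definition quad1 k := b * c k.+1 ^+ 2 + a * d k ^+ 2 - a * b * c k.+1 * d k.
Definition quad2 k := b * c k ^+ 2 + a * d k.+1 ^+ 2 - a * b * d k.+1 * c k.

Lemma quadE k :
  quad1 k = (if odd k then a else b) /\ quad2 k = (if odd k then b else a).
Proof.
elim: k => [|k [IH1 IH2]]; first by rewrite /quad1 /quad2 /cseq /dseq /=; split; ring.
have -> : quad1 k.+1 = quad2 k by rewrite /quad1 /quad2 cseqSS; ring.
have -> : quad2 k.+1 = quad1 k by rewrite /quad1 /quad2 dseqSS; ring.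
by rewrite IH1 IH2 /=; case: (odd k).
Qed.

Lemma ineq1_iff k :
  ineq1 a b k <-> (if odd k then a else b) <= a * (d k.+2 - d k - 1).
Proof.
have [<- _] := quadE k; rewrite -subr_le0 /ineq1.
suff -> : quad1 k - a * (d k.+2 - d k - 1) =
  b * c k.+1 ^+ 2 + a * d k ^+ 2 - a * b * c k.+1 * d k + 2 * a * d k
    - a * b * c k.+1 + a by [].
by rewrite /quad1 dseqSS; ring.
Qed.

Lemma ineq2_iff k :
  ineq2 a b k <-> (if odd k then b else a) <= b * (c k.+2 - c k - 1).
Proof.
have [_ <-] := quadE k; rewrite -subr_le0 /ineq2.
suff -> : quad2 k - b * (c k.+2 - c k - 1) =
  b * c k ^+ 2 + a * d k.+1 ^+ 2 - a * b * d k.+1 * c k - a * b * d k.+1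
    + 2 * b * c k + b by [].
by rewrite /quad2 cseqSS; ring.
Qed.

Lemma cseq_incr0 : c 2 - c 0 = a. Proof. by rewrite /cseq /=; ring. Qed.
Lemma cseq_incr1 : c 3 - c 1 = a * b - 2. Proof. by rewrite /cseq /=; ring. Qed.
Lemma cseq_incr2 : c 4 - c 2 = (a * b - 3) * a. Proof. by rewrite /cseq /=; ring. Qed.
Lemma dseq_incr0 : d 2 - d 0 = b. Proof. by rewrite /dseq /=; ring. Qed.
Lemma dseq_incr1 : d 3 - d 1 = a * b - 2. Proof. by rewrite /dseq /=; ring. Qed.
Lemma dseq_incr2 : d 4 - d 2 = (a * b - 3) * b. Proof. by rewrite /dseq /=; ring. Qed.

Hypotheses (a_ge0 : 0 <= a) (b_ge0 : 0 <= b) (ab_ge4 : 4 <= a * b).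

Lemma ineqs_of_incr_bounds k (m n : int) :
    m <= d k.+2 - d k -> n <= c k.+2 - c k ->
    (if odd k then a else b) <= a * (m - 1) ->
    (if odd k then b else a) <= b * (n - 1) ->
  ineq1 a b k /\ ineq2 a b k.
Proof.
move=> dk ck le1 le2; rewrite ineq1_iff ineq2_iff.
by split; [exact: le_mul_subr1_trans dk a_ge0 le1 | exact: le_mul_subr1_trans ck b_ge0 le2].
Qed.

Lemma cseq_incr_mono j k :
  (j <= k)%N -> odd j = odd k -> c j.+2 - c j <= c k.+2 - c k.
Proof.
move: j k; apply: (rec2_incr_mono _ cseq_rec2); rewrite /cseq /=; lia.
Qed.

Lemma dseq_incr_mono j k :
  (j <= k)%N -> odd j = odd k -> d j.+2 - d j <= d k.+2 - d k.
Proof.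
move: j k; apply: (rec2_incr_mono _ dseq_rec2); rewrite /dseq /=; lia.
Qed.

Lemma cd_incr_ge_first k :
  (if odd k then a * b - 2 else b) <= d k.+2 - d k /\
  (if odd k then a * b - 2 else a) <= c k.+2 - c k.
Proof.
case odd_k: (odd k).
- have k_ge1 : (1 <= k)%N := odd_gt0 odd_k.
  have := dseq_incr_mono k_ge1 (esym odd_k).
  have := cseq_incr_mono k_ge1 (esym odd_k).
  by rewrite dseq_incr1 cseq_incr1.
- have := dseq_incr_mono (leq0n k) (esym odd_k).
  have := cseq_incr_mono (leq0n k) (esym odd_k).
  by rewrite dseq_incr0 cseq_incr0.
Qed.

Lemma cd_incr_ge_second k : (2 <= k)%N -> ~~ odd k ->
  (a * b - 3) * b <= d k.+2 - d k /\ (a * b - 3) * a <= c k.+2 - c k.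
Proof.
move=> k_ge2 /negbTE odd_k.
have := dseq_incr_mono k_ge2 (esym odd_k).
have := cseq_incr_mono k_ge2 (esym odd_k).
by rewrite dseq_incr2 cseq_incr2.
Qed.

End CDSequences.

Theorem lemma4p4 (a b : int) (hb1 : 1 <= b) (hab : b <= a) :
  (2 <= b -> forall k : nat, ineq1 a b k /\ ineq2 a b k) /\
  (b = 1 -> 5 <= a -> forall k : nat, (1 <= k)%N -> ineq1 a b k /\ ineq2 a b k).
Proof.
have [a_ge0 b_ge0] : 0 <= a /\ 0 <= b by lia.
split => [b_ge2 k | b1 a_ge5 k k_ge1].
  have ab_ge4 : 4 <= a * b by nia.
  have [dk ck] := cd_incr_ge_first a_ge0 b_ge0 ab_ge4 k.
  by apply: (ineqs_of_incr_bounds a_ge0 b_ge0 dk ck); case: (odd k); nia.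
subst b; have a_ge4 : 4 <= a * 1 by lia.
case odd_k: (odd k).
  have [dk ck] := cd_incr_ge_first a_ge0 b_ge0 a_ge4 k.
  by apply: (ineqs_of_incr_bounds a_ge0 b_ge0 dk ck); rewrite odd_k /=; nia.
have k_ge2 : (2 <= k)%N by case: k k_ge1 odd_k => [|[]].
have [dk ck] := cd_incr_ge_second a_ge0 b_ge0 a_ge4 k_ge2 (negbT odd_k).
by apply: (ineqs_of_incr_bounds a_ge0 b_ge0 dk ck); rewrite odd_k /=; nia.
Qed.
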